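(* Let $(a_p)\in\mathcal{T}^+$ and let $\langle\cdot,\cdot\rangle$ be the associated inner product on $\mathcal{S}^*$, $\langle b,c\rangle=\sum_{p\in\mathbb{Z}}b^p\overline{c^p}a_p$. The operator $z$ on $\mathcal{S}^*$ is continuous with respect to the inner product topology if and only if the sequence of ratios $(a_p/a_{p+1})_{p\in\mathbb{Z}}$ is bounded. In this case $\|z\|^2=\sup_p\{a_p/a_{p+1}\}$.
   Context: $\mathcal{S}$ is the space of rapidly decreasing complex $\mathbb{Z}$-indexed sequences and $\mathcal{S}^*$ its dual; $e_p\in\mathcal{S}^*$ has $1$ in place $p$ and $0$ elsewhere, and elements are written $b=(b^p)=\sum b^pe_p$. $z$ denotes the operator on $\mathcal{S}^*$ adjoint to multiplication by $z=e^{2\pi it}$ under the Fourier isomorphism $\mathcal{S}\cong C^\infty(S^1,\mathbb{C})$; explicitly $ze_p=e_{p-1}$. $\mathcal{T}^+$ is the set of strictly positive rapidly decreasing sequences $(a_p)_{p\in\mathbb{Z}}$ with $a_p=a_{-p}$. $\|z\|$ is the operator norm with respect to $\langle\cdot,\cdot\rangle$. *)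

From Stdlib Require Import Reals ZArith.
From Coquelicot Require Import Coquelicot.
Open Scope R_scope.

Definition sumZ (f : Z -> R) : R :=
  Series (fun n : nat => f (Z.of_nat n)) + Series (fun n : nat => f (- Z.of_nat (S n))%Z).

Definition wt (p : Z) : R := 1 + IZR (Z.abs p).

Definition rapidly_decreasing (a : Z -> R) : Prop :=
  forall k : nat, exists M : R, forall p : Z, Rabs (a p) * wt p ^ k <= M.

Definition Tplus (a : Z -> R) : Prop :=
  rapidly_decreasing a /\ (forall p, 0 < a p) /\ (forall p, a p = a (- p)%Z).

(* S^* : the dual of the rapidly decreasing sequences = polynomially bounded
   (tempered) complex sequences b = sum b^p e_p. *)
Definition Sdual (b : Z -> C) : Prop :=
  exists (k : nat) (M : R), forall p : Z, Cmod (b p) <= M * wt p ^ k.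

(* The operator z on S^*, z e_p = e_{p-1}, i.e. (z b)^p = b^(p+1). *)
Definition zop (b : Z -> C) : Z -> C := fun p => b (p + 1)%Z.

Definition ip (a : Z -> R) (b c : Z -> C) : C :=
  (sumZ (fun p => Re (b p * Cconj (c p) * RtoC (a p))),
   sumZ (fun p => Im (b p * Cconj (c p) * RtoC (a p)))).

Definition ipnorm (a : Z -> R) (b : Z -> C) : R := sqrt (Re (ip a b b)).

Definition subseq (b c : Z -> C) : Z -> C := fun p => Cminus (b p) (c p).

Definition z_continuous (a : Z -> R) : Prop :=
  forall b, Sdual b -> forall eps, 0 < eps -> exists delta, 0 < delta /\
    forall c, Sdual c -> ipnorm a (subseq c b) < delta ->
      ipnorm a (subseq (zop c) (zop b)) < eps.

Definition z_opnorm (a : Z -> R) : Rbar :=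
  Lub_Rbar (fun r => exists b, Sdual b /\ ipnorm a b <= 1 /\ r = ipnorm a (zop b)).

Definition ratios_bounded (a : Z -> R) : Prop :=
  exists M : R, forall p : Z, Rabs (a p / a (p + 1)%Z) <= M.

Definition ratios_sup (a : Z -> R) : Rbar :=
  Lub_Rbar (fun r => exists p : Z, r = a p / a (p + 1)%Z).

From Stdlib Require Import Reals ZArith Lia Lra Classical FunctionalExtensionality.
From Coquelicot Require Import Coquelicot.
Open Scope R_scope.

(* ||b||^2 = sum_p |b^p|^2 a_p and ||z b||^2 = sum_p |b^(p+1)|^2 a_p
   = sum_q |b^q|^2 a_(q-1), so ||z b||^2 <= (sup_p a_p / a_(p+1)) ||b||^2.  The bound
   is attained on the basis vectors: ||z e_(p+1)||^2 / ||e_(p+1)||^2 = a_p / a_(p+1).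
   Conversely, continuity of the linear map z at 0 bounds ||z b|| by a multiple of
   ||b||, and testing on the e_(p+1) bounds the ratios. *)

Lemma sum_n_telescope (u : nat -> R) (N : nat) :
  sum_n (fun n => u n - u (S n)) N = u O - u (S N).
Proof.
  induction N as [|N IH].
  - now rewrite sum_O.
  - rewrite sum_Sn, IH. unfold plus; simpl. ring.
Qed.

Lemma is_series_telescope (u : nat -> R) (l : R) :
  is_lim_seq u l -> is_series (fun n => u n - u (S n)) (u O - l).
Proof.
  intro Hu. change (is_lim_seq (sum_n (fun n => u n - u (S n))) (u O - l)).
  apply is_lim_seq_ext with (fun N => u O - u (S N)).
  { intro N. now rewrite sum_n_telescope. }
  apply (is_lim_seq_minus' _ _ (u O) l); [apply is_lim_seq_const|].
  now apply is_lim_seq_incr_1 with (u := u).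
Qed.

Lemma is_lim_seq_inv_succ : is_lim_seq (fun n => / (INR n + 1)) 0.
Proof.
  change (Finite 0) with (Rbar_inv p_infty).
  apply is_lim_seq_inv; [|discriminate].
  apply (is_lim_seq_plus _ _ p_infty 1 p_infty);
    [apply is_lim_seq_INR | apply is_lim_seq_const | reflexivity].
Qed.

Lemma ex_series_inv_succ_sq : ex_series (fun n => / (INR n + 1) ^ 2).
Proof.
  set (u n := / (INR n + 1)).
  apply (@ex_series_le R_AbsRing R_CompleteNormedModule _ (fun n => 2 * (u n - u (S n)))).
  - intro n. pose proof (pos_INR n). unfold u. rewrite S_INR.
    change norm with Rabs. rewrite Rabs_pos_eq.
    + replace (2 * _) with (/ ((INR n + 1) * (INR n + 1 + 1) / 2)) by (field; lra).
      apply Rinv_le_contravar; nra.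
    + apply Rlt_le, Rinv_0_lt_compat. nra.
  - apply (ex_series_scal_l 2 (fun n => u n - u (S n))).
    exists (u O - 0). apply is_series_telescope, is_lim_seq_inv_succ.
Qed.

Lemma Series_indicator (m : nat) (x : R) :
  Series (fun n => if Nat.eq_dec n m then x else 0) = x.
Proof.
  rewrite (Series_incr_n_aux _ m).
  2:{ intros k Hk. destruct (Nat.eq_dec k m); [lia | reflexivity]. }
  (* a sequence supported at index 0 is a power series evaluated at 0 *)
  transitivity (PSeries (fun k => if Nat.eq_dec (m + k) m then x else 0) 0).
  - apply Series_ext. intros [|k]; simpl; [ring|].
    destruct (Nat.eq_dec (m + S k) m); [lia | ring].
  - rewrite PSeries_0. destruct (Nat.eq_dec (m + 0) m); [reflexivity | lia].
Qed.

Lemma Series_zero : Series (fun _ : nat => 0) = 0.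
Proof.
  transitivity (Series (fun n => if Nat.eq_dec n 0 then 0 else 0)).
  - apply Series_ext. intro n. now destruct (Nat.eq_dec n 0).
  - apply Series_indicator.
Qed.

Definition ex_sumZ (f : Z -> R) : Prop :=
  ex_series (fun n : nat => f (Z.of_nat n)) /\ ex_series (fun n : nat => f (- Z.of_nat (S n))%Z).

Lemma sumZ_ext (f g : Z -> R) : (forall p, f p = g p) -> sumZ f = sumZ g.
Proof.
  intro H. unfold sumZ.
  now rewrite (Series_ext _ _ (fun n => H _)), (Series_ext _ _ (fun n => H _)).
Qed.

Lemma sumZ_scal (c : R) (f : Z -> R) : sumZ (fun p => c * f p) = c * sumZ f.
Proof. unfold sumZ. rewrite !Series_scal_l. ring. Qed.

Lemma ex_sumZ_scal (c : R) (f : Z -> R) : ex_sumZ f -> ex_sumZ (fun p => c * f p).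
Proof.
  intros [H1 H2]. split; [exact (ex_series_scal_l c _ H1) | exact (ex_series_scal_l c _ H2)].
Qed.

Lemma sumZ_le (f g : Z -> R) : ex_sumZ g -> (forall p, 0 <= f p <= g p) -> sumZ f <= sumZ g.
Proof. intros [H1 H2] H. unfold sumZ. apply Rplus_le_compat; apply Series_le; auto. Qed.

Lemma sumZ_indicator (r : Z) (x : R) : sumZ (fun p => if Z.eq_dec p r then x else 0) = x.
Proof.
  unfold sumZ. destruct (Z_le_gt_dec 0 r) as [Hr | Hr].
  - destruct (Z_of_nat_complete r Hr) as [m ->].
    rewrite (Series_ext (fun n => if Z.eq_dec (Z.of_nat n) _ then x else 0)
                        (fun n => if Nat.eq_dec n m then x else 0)),
            (Series_ext (fun n => if Z.eq_dec (- Z.of_nat (S n)) _ then x else 0) (fun _ => 0)),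
            Series_indicator, Series_zero; [ring | |];
      intro n; destruct (Z.eq_dec _ _); try destruct (Nat.eq_dec n m); first [reflexivity | lia].
  - destruct (Z_of_nat_complete (- r - 1)) as [m Hm]; [lia|].
    rewrite (Series_ext (fun n => if Z.eq_dec (Z.of_nat n) _ then x else 0) (fun _ => 0)),
            (Series_ext (fun n => if Z.eq_dec (- Z.of_nat (S n)) _ then x else 0)
                        (fun n => if Nat.eq_dec n m then x else 0)),
            Series_indicator, Series_zero; [ring | |];
      intro n; destruct (Z.eq_dec _ _); try destruct (Nat.eq_dec n m); first [reflexivity | lia].
Qed.

Lemma ex_series_neg_of_ex_sumZ (f : Z -> R) :
  ex_sumZ f -> ex_series (fun n : nat => f (- Z.of_nat n)%Z).
Proof. intros [_ H]. now apply ex_series_incr_1. Qed.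

Lemma sumZ_shift (f : Z -> R) : ex_sumZ f -> sumZ (fun p => f (p + 1)%Z) = sumZ f.
Proof.
  intro H. pose proof (ex_series_neg_of_ex_sumZ f H) as Hneg. destruct H as [Hpos _].
  unfold sumZ.
  rewrite (Series_ext (fun n => f (Z.of_nat n + 1)%Z) (fun n => f (Z.of_nat (S n))))
    by (intro; f_equal; lia).
  rewrite (Series_ext (fun n => f (- Z.of_nat (S n) + 1)%Z) (fun n => f (- Z.of_nat n)%Z))
    by (intro; f_equal; lia).
  rewrite (Series_incr_1 _ Hpos), (Series_incr_1 _ Hneg). simpl. ring.
Qed.

Lemma ex_sumZ_shift (f : Z -> R) : ex_sumZ f -> ex_sumZ (fun p => f (p + 1)%Z).
Proof.
  intro H. pose proof (ex_series_neg_of_ex_sumZ f H) as Hneg. destruct H as [Hpos _]. split.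
  - apply (ex_series_ext (fun n => f (Z.of_nat (S n)))); [intro; f_equal; lia|].
    now apply (ex_series_incr_1 (fun n => f (Z.of_nat n))).
  - apply (ex_series_ext (fun n => f (- Z.of_nat n)%Z)); [intro; f_equal; lia | exact Hneg].
Qed.

Lemma wt_ge_INR (n : nat) (p : Z) : (Z.of_nat n <= Z.abs p)%Z -> INR n + 1 <= wt p.
Proof. intro H. unfold wt. rewrite INR_IZR_INZ. apply IZR_le in H. lra. Qed.

Lemma wt_ge1 (p : Z) : 1 <= wt p.
Proof. pose proof (wt_ge_INR 0 p (Z.abs_nonneg p)) as H. simpl in H. lra. Qed.

Lemma ex_sumZ_of_weighted_bound (f : Z -> R) (K : R) :
  (forall p, 0 <= f p) -> (forall p, f p * wt p ^ 2 <= K) -> ex_sumZ f.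
Proof.
  intros Hf HK.
  assert (Hle : forall (n : nat) p, (Z.of_nat n <= Z.abs p)%Z -> f p <= K * / (INR n + 1) ^ 2).
  { intros n p Hnp. pose proof (wt_ge_INR n p Hnp). pose proof (pos_INR n).
    pose proof (Hf p). pose proof (HK p).
    assert (f p * (INR n + 1) ^ 2 <= K)
      by (eapply Rle_trans; [|eassumption]; apply Rmult_le_compat_l, pow_incr; lra).
    apply Rmult_le_reg_r with ((INR n + 1) ^ 2); [nra|].
    rewrite Rmult_assoc, Rinv_l by nra. lra. }
  split;
    apply (@ex_series_le R_AbsRing R_CompleteNormedModule _ (fun n => K * / (INR n + 1) ^ 2));
    try exact (ex_series_scal_l K _ ex_series_inv_succ_sq);
    intro n; change norm with Rabs; rewrite Rabs_pos_eq by apply Hf; apply Hle; lia.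
Qed.

Lemma Sdual_subseq (b c : Z -> C) : Sdual b -> Sdual c -> Sdual (subseq b c).
Proof.
  intros [k1 [M1 H1]] [k2 [M2 H2]]. exists (k1 + k2)%nat, (Rabs M1 + Rabs M2). intro p.
  pose proof (wt_ge1 p). specialize (H1 p). specialize (H2 p).
  assert (wt p ^ k1 <= wt p ^ (k1 + k2)) by (apply Rle_pow; lia || lra).
  assert (wt p ^ k2 <= wt p ^ (k1 + k2)) by (apply Rle_pow; lia || lra).
  assert (0 <= wt p ^ k1) by (apply pow_le; lra).
  assert (0 <= wt p ^ k2) by (apply pow_le; lra).
  pose proof (Rle_abs M1). pose proof (Rle_abs M2).
  pose proof (Rabs_pos M1). pose proof (Rabs_pos M2).
  unfold subseq, Cminus. eapply Rle_trans; [apply Cmod_triangle|]. rewrite Cmod_opp.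
  nra.
Qed.

Lemma Sdual_zero : Sdual (fun _ => RtoC 0).
Proof. exists 0%nat, 0. intro p. rewrite Cmod_0. simpl. lra. Qed.

Definition basis (r : Z) (t : R) : Z -> C := fun p => if Z.eq_dec p r then RtoC t else RtoC 0.

Lemma Sdual_basis (r : Z) (t : R) : Sdual (basis r t).
Proof.
  exists 0%nat, (Rabs t). intro p. unfold basis. simpl. rewrite Rmult_1_r.
  destruct (Z.eq_dec p r); rewrite Cmod_R; [lra|]. rewrite Rabs_R0. apply Rabs_pos.
Qed.

Lemma zop_basis (r : Z) (t : R) : zop (basis (r + 1) t) = basis r t.
Proof.
  apply functional_extensionality. intro p. unfold zop, basis.
  destruct (Z.eq_dec (p + 1) (r + 1)), (Z.eq_dec p r); first [reflexivity | lia].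
Qed.

Lemma subseq_zero_r (b : Z -> C) : subseq b (fun _ => RtoC 0) = b.
Proof. apply functional_extensionality. intro p. unfold subseq. ring. Qed.

Lemma ipnorm_Cmod (a : Z -> R) (b : Z -> C) :
  ipnorm a b = sqrt (sumZ (fun p => Cmod (b p) ^ 2 * a p)).
Proof.
  unfold ipnorm. f_equal.
  change (Re (ip a b b)) with (sumZ (fun p => Re (b p * Cconj (b p) * RtoC (a p)))).
  apply sumZ_ext. intro p.
  now rewrite re_scal_r, <- Cmod2_conj, re_RtoC.
Qed.

Lemma is_lub_Rbar_nonempty (E : R -> Prop) (s : R) : is_lub_Rbar E s -> exists x, E x.
Proof.
  intros [_ Hleast]. apply NNPP. intro Hne.
  apply (Hleast m_infty). intros x Hx. exfalso. apply Hne. now exists x.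
Qed.

Lemma is_lub_Rbar_bounded (E : R -> Prop) (x M : R) :
  E x -> (forall y, E y -> y <= M) -> exists s : R, is_lub_Rbar E s.
Proof.
  intros Hx HM. destruct (ex_lub_Rbar E) as [[s| |] [Hub Hleast]].
  - exists s. now split.
  - exfalso. apply (Hleast M). intros y Hy. apply HM, Hy.
  - exfalso. apply (Hub x Hx).
Qed.

Lemma is_lub_Rbar_sqrt (E A : R -> Prop) (s : R) :
  is_lub_Rbar E s -> (forall x, E x -> 0 <= x) ->
  (forall y, A y -> y <= sqrt s) -> (forall x, E x -> A (sqrt x)) ->
  is_lub_Rbar A (sqrt s).
Proof.
  intros HE Hnn HubA HA. destruct (is_lub_Rbar_nonempty E s HE) as [x0 Hx0].
  destruct HE as [_ HleastE]. split; [exact HubA|].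
  intros [u| |] Hu; simpl; trivial.
  - assert (Hsqrt : forall x, E x -> sqrt x <= u) by (intros x Hx; exact (Hu _ (HA x Hx))).
    assert (Hu0 : 0 <= u) by (eapply Rle_trans; [apply sqrt_pos | exact (Hsqrt x0 Hx0)]).
    rewrite <- (sqrt_pow2 u Hu0). apply sqrt_le_1_alt, (HleastE (Finite (u ^ 2))).
    intros x Hx. simpl. rewrite <- (sqrt_sqrt x (Hnn x Hx)).
    pose proof (sqrt_pos x). pose proof (Hsqrt x Hx). nra.
  - exact (Hu _ (HA x0 Hx0)).
Qed.

Definition ratios (a : Z -> R) : R -> Prop := fun r => exists p : Z, r = a p / a (p + 1)%Z.

Section PositiveWeight.

Variable a : Z -> R.
Hypothesis a_rapid : rapidly_decreasing a.
Hypothesis a_pos : forall p, 0 < a p.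

Lemma ratio_pos (p : Z) : 0 < a p / a (p + 1)%Z.
Proof. apply Rdiv_lt_0_compat; apply a_pos. Qed.

Lemma ex_sumZ_Sdual (b : Z -> C) : Sdual b -> ex_sumZ (fun p => Cmod (b p) ^ 2 * a p).
Proof.
  intros [k [M Hb]].
  (* two factors wt p ^ k absorb |b p|^2, the remaining wt p ^ 2 gives summability *)
  destruct (a_rapid (k + k + 2)%nat) as [K HK].
  apply (ex_sumZ_of_weighted_bound _ (M ^ 2 * K)); intro p;
    pose proof (a_pos p); pose proof (Cmod_ge_0 (b p)); [nra|].
  specialize (Hb p). specialize (HK p). pose proof (wt_ge1 p).
  rewrite Rabs_pos_eq, !pow_add in HK by lra.
  assert (0 < wt p ^ k) by (apply pow_lt; lra).
  assert (0 < wt p ^ 2) by (apply pow_lt; lra).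
  assert (Cmod (b p) ^ 2 <= M ^ 2 * (wt p ^ k) ^ 2)
    by (rewrite <- Rpow_mult_distr; apply pow_incr; lra).
  assert (Cmod (b p) ^ 2 * (a p * wt p ^ 2) <= M ^ 2 * (wt p ^ k) ^ 2 * (a p * wt p ^ 2))
    by (apply Rmult_le_compat_r; nra).
  assert (M ^ 2 * (a p * (wt p ^ k * wt p ^ k * wt p ^ 2)) <= M ^ 2 * K)
    by (apply Rmult_le_compat_l; [apply pow2_ge_0 | lra]).
  nra.
Qed.

Lemma ipnorm_zop_le (M : R) (b : Z -> C) :
  (forall p, a p / a (p + 1)%Z <= M) -> Sdual b -> ipnorm a (zop b) <= sqrt M * ipnorm a b.
Proof.
  intros HM Hb. pose proof (ex_sumZ_Sdual b Hb) as Hs.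
  assert (HM0 : 0 <= M) by (pose proof (ratio_pos 0) ; pose proof (HM 0%Z); lra).
  rewrite !ipnorm_Cmod, <- sqrt_mult_alt by exact HM0.
  apply sqrt_le_1_alt. unfold zop.
  rewrite <- (sumZ_shift _ Hs), <- sumZ_scal.
  apply sumZ_le; [apply ex_sumZ_scal, (ex_sumZ_shift (fun p => Cmod (b p) ^ 2 * a p)), Hs|].
  intro p. pose proof (pow2_ge_0 (Cmod (b (p + 1)%Z))). pose proof (a_pos p).
  assert (a p <= M * a (p + 1)%Z) by (apply Rle_div_l; [apply a_pos | apply HM]).
  split; nra.
Qed.

Lemma ipnorm_basis (r : Z) (t : R) : ipnorm a (basis r t) = Rabs t * sqrt (a r).
Proof.
  rewrite ipnorm_Cmod, <- sqrt_Rsqr_abs, <- sqrt_mult_alt by apply Rle_0_sqr.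
  f_equal. rewrite <- (sumZ_indicator r (Rsqr t * a r)). apply sumZ_ext. intro p.
  unfold basis. destruct (Z.eq_dec p r) as [->|].
  - now rewrite Cmod_R, <- Rsqr_pow2, <- Rsqr_abs.
  - rewrite Cmod_0. ring.
Qed.

Lemma ipnorm_zop_basis (p : Z) (s : R) : 0 <= s ->
  exists b, Sdual b /\ ipnorm a b = s /\ ipnorm a (zop b) = s * sqrt (a p / a (p + 1)%Z).
Proof.
  intro Hs. pose proof (a_pos p). pose proof (a_pos (p + 1)%Z).
  assert (0 < sqrt (a (p + 1)%Z)) by (apply sqrt_lt_R0; lra).
  assert (0 <= s / sqrt (a (p + 1)%Z)) by (apply Rdiv_le_0_compat; lra).
  exists (basis (p + 1) (s / sqrt (a (p + 1)%Z))). split; [apply Sdual_basis|].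
  rewrite zop_basis, !ipnorm_basis, Rabs_pos_eq, sqrt_div_alt by lra.
  split; field; lra.
Qed.

Lemma ratios_bounded_of_z_continuous : z_continuous a -> ratios_bounded a.
Proof.
  intro Hc. destruct (Hc _ Sdual_zero 1 Rlt_0_1) as [d [Hd Hcd]].
  exists ((2 / d) ^ 2). intro p.
  destruct (ipnorm_zop_basis p (d / 2)) as [b [Hb [Hn Hzn]]]; [lra|].
  specialize (Hcd b Hb). rewrite !subseq_zero_r, Hn, Hzn in Hcd.
  assert (Hsqrt : sqrt (a p / a (p + 1)%Z) < 2 / d).
  { apply Rlt_div_r; [lra|]. assert (d / 2 * sqrt (a p / a (p + 1)%Z) < 1) by (apply Hcd; lra).
    nra. }
  pose proof (ratio_pos p). pose proof (sqrt_pos (a p / a (p + 1)%Z)).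
  rewrite Rabs_pos_eq, <- (sqrt_sqrt (a p / a (p + 1)%Z)) by lra. nra.
Qed.

Lemma z_continuous_of_ratios_bounded : ratios_bounded a -> z_continuous a.
Proof.
  intros [M HM] b Hb eps Heps.
  assert (HM' : forall p, a p / a (p + 1)%Z <= M)
    by (intro p; eapply Rle_trans; [apply Rle_abs | apply HM]).
  pose proof (sqrt_pos M).
  exists (eps / (sqrt M + 1)). split; [apply Rdiv_lt_0_compat; lra|].
  intros c Hc Hn. apply Rlt_div_r in Hn; [|lra].
  change (ipnorm a (zop (subseq c b)) < eps).
  pose proof (ipnorm_zop_le M (subseq c b) HM' (Sdual_subseq c b Hc Hb)).
  pose proof (sqrt_pos (Re (ip a (subseq c b) (subseq c b)))).
  fold (ipnorm a (subseq c b)) in *. nra.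
Qed.

Lemma z_opnorm_sqrt (s : R) : is_lub_Rbar (ratios a) s -> z_opnorm a = Finite (sqrt s).
Proof.
  intro Hs. apply is_lub_Rbar_unique, (is_lub_Rbar_sqrt (ratios a)); [exact Hs | | |].
  - intros x [p ->]. apply Rlt_le, ratio_pos.
  - intros y [b [Hb [Hn ->]]].
    assert (HM : forall p, a p / a (p + 1)%Z <= s)
      by (intro p; exact (proj1 Hs _ (ex_intro _ p eq_refl))).
    pose proof (ipnorm_zop_le s b HM Hb). pose proof (sqrt_pos s). nra.
  - intros x [p ->]. destruct (ipnorm_zop_basis p 1 Rle_0_1) as [b [Hb [Hn Hzn]]].
    exists b. split; [exact Hb|]. split; [lra|]. now rewrite Hzn, Rmult_1_l.
Qed.

Lemma z_opnorm_sq : ratios_bounded a -> Rbar_mult (z_opnorm a) (z_opnorm a) = ratios_sup a.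
Proof.
  intros [M HM].
  assert (Hr0 : ratios a (a 0%Z / a 1%Z)) by now exists 0%Z.
  destruct (is_lub_Rbar_bounded (ratios a) _ M Hr0) as [s Hs].
  { intros y [p ->]. eapply Rle_trans; [apply Rle_abs | apply HM]. }
  assert (Hs0 : 0 <= s) by (pose proof (ratio_pos 0); pose proof (proj1 Hs _ Hr0); simpl in *; lra).
  unfold ratios_sup. fold (ratios a).
  rewrite (is_lub_Rbar_unique _ _ Hs), (z_opnorm_sqrt s Hs). simpl. now rewrite sqrt_sqrt.
Qed.

End PositiveWeight.

Theorem mainTheorem17 (a : Z -> R) (ha : Tplus a) :
  (z_continuous a <-> ratios_bounded a) /\
  (ratios_bounded a -> Rbar_mult (z_opnorm a) (z_opnorm a) = ratios_sup a).
Proof.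
  destruct ha as [a_rapid [a_pos _]].
  split; [split|].
  - now apply ratios_bounded_of_z_continuous.
  - now apply z_continuous_of_ratios_bounded.
  - now apply z_opnorm_sq.
Qed.
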